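(* Let $\mathcal{X}$ be a finite set, let $\underline{T}$ be a lower transition operator on $\mathcal{L}(\mathcal{X})$ and let $(\underline{T}_n)_{n\in\mathbb{N}}$ be a sequence of lower transition operators on $\mathcal{L}(\mathcal{X})$. Then $\|\underline{T}_n-\underline{T}\|\to0$ if and only if $\underline{T}_nf\to\underline{T}f$ for every $f\in\mathcal{L}(\mathcal{X})$.
   Context: $\mathcal{L}(\mathcal{X})$ is the set of real-valued functions on $\mathcal{X}$ with the maximum norm $\|f\|=\max_{x}|f(x)|$. For non-negatively homogeneous operators $A\colon\mathcal{L}(\mathcal{X})\to\mathcal{L}(\mathcal{X})$ (i.e. $A(\lambda f)=\lambda Af$ for $\lambda\ge0$), $\|A\|\coloneqq\sup\{\|Af\|\colon\|f\|=1\}$. A lower transition operator is a map $\underline{T}\colon\mathcal{L}(\mathcal{X})\to\mathcal{L}(\mathcal{X})$ such that for all $f,g$ and $\lambda\ge0$: $\underline{T}f\ge\min f$ (pointwise); $\underline{T}(f+g)\ge\underline{T}f+\underline{T}g$; $\underline{T}(\lambda f)=\lambda\underline{T}f$. *)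

From HB Require Import structures.
From mathcomp Require Import all_boot all_order all_algebra.
From mathcomp Require Import all_classical all_reals all_analysis.
Set Implicit Arguments. Unset Strict Implicit. Unset Printing Implicit Defensive.
Import Order.TTheory GRing.Theory Num.Theory.
Local Open Scope classical_set_scope.
Local Open Scope ring_scope.

Section Defs.
Variables (R : realType) (X : finType).

Definition maxnorm (f : X -> R) : R := \big[Num.max/0]_(x : X) `|f x|.

Definition opnorm (A : (X -> R) -> (X -> R)) : R :=
  sup [set maxnorm (A f) | f in [set f | maxnorm f = 1]].

Definition opsub (A B : (X -> R) -> (X -> R)) : (X -> R) -> (X -> R) :=
  fun f x => A f x - B f x.

Definition lower_transition_operator (T : (X -> R) -> (X -> R)) : Prop :=
  [/\ (forall f x, inf (range f) <= T f x),
      (forall f g x, T f x + T g x <= T (fun y => f y + g y) x) &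
      (forall (l : R) f, 0 <= l -> T (fun y => l * f y) = (fun y => l * T f y))].

End Defs.

From HB Require Import structures.
From mathcomp Require Import all_boot all_order all_algebra.
From mathcomp Require Import all_classical all_reals all_analysis.
From mathcomp Require Import ring lra.
Set Implicit Arguments. Unset Strict Implicit.
Import numFieldNormedType.Exports.
Import Order.TTheory GRing.Theory Num.Theory.
Local Open Scope classical_set_scope.
Local Open Scope ring_scope.

(** If [||T_n - T|| -> 0], then [||T_n f - T f|| <= ||f|| ||T_n - T|| -> 0].
    Conversely, every lower transition operator is 1-Lipschitz for the maximum
    norm, so [f |-> ||T_n f - T f||] is 2-Lipschitz uniformly in [n]. As [X] is
    finite, the unit sphere is covered by finitely many balls of radius [1/N]
    around grid functions with values in [{k/N - 1 | k <= 2N}]; pointwise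
    convergence at these finitely many centres is uniform, and the Lipschitz
    bound spreads it to the whole unit sphere. *)

Section MaxNorm.
Variables (R : realType) (X : finType).
Implicit Types (f g : X -> R) (c : R).

Lemma maxnorm_ge0 f : 0 <= maxnorm f.
Proof. by apply: (big_ind (fun v => 0 <= v)) => // a b a0 _; rewrite le_max a0. Qed.

Lemma ler_maxnorm f x : `|f x| <= maxnorm f.
Proof. by rewrite /maxnorm (bigD1 x) //= le_max lexx. Qed.

Lemma maxnorm_le f c : 0 <= c -> (forall x, `|f x| <= c) -> maxnorm f <= c.
Proof.
move=> c0 fc; apply: (big_ind (fun v => v <= c)) => // a b ac bc.
by rewrite ge_max ac bc.
Qed.

Lemma maxnormN f : maxnorm (fun x => - f x) = maxnorm f.
Proof. by apply: eq_bigr => x _; rewrite normrN. Qed.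

Lemma maxnorm_distrC f g :
  maxnorm (fun x => f x - g x) = maxnorm (fun x => g x - f x).
Proof. by apply: eq_bigr => x _; rewrite distrC. Qed.

Lemma maxnormZ f c : 0 <= c -> maxnorm (fun x => c * f x) = c * maxnorm f.
Proof.
move=> c0; apply/eqP; rewrite eq_le; apply/andP; split.
  apply: maxnorm_le => [|x]; first by rewrite mulr_ge0 ?maxnorm_ge0.
  by rewrite normrM ger0_norm // ler_wpM2l // ler_maxnorm.
have [->|cn0] := eqVneq c 0; first by rewrite mul0r maxnorm_ge0.
have cp : 0 < c by rewrite lt_neqAle eq_sym cn0.
rewrite -ler_pdivlMl //; apply: maxnorm_le => [|x].
  by rewrite mulr_ge0 ?invr_ge0 ?maxnorm_ge0.
rewrite ler_pdivlMl //.
by have := ler_maxnorm (fun x => c * f x) x; rewrite normrM ger0_norm.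
Qed.

Lemma maxnorm_eq0 f : maxnorm f = 0 -> f = (fun _ => 0).
Proof.
by move=> f0; apply: funext => x; apply/eqP; rewrite -normr_le0 -f0 ler_maxnorm.
Qed.

Definition grid (n : nat) (h : {ffun X -> 'I_(2 * n.+1).+1}) : X -> R :=
  fun x => (h x)%:R / n.+1%:R - 1.

Lemma grid_approx (n : nat) g : maxnorm g <= 1 ->
  exists h : {ffun X -> 'I_(2 * n.+1).+1},
    maxnorm (fun x => g x - grid h x) <= n.+1%:R^-1.
Proof.
move=> g1; set N : R := n.+1%:R.
have Np : 0 < N by rewrite ltr0n.
pose y x := (g x + 1) * N.
have gx1 x : `|g x| <= 1 := le_trans (ler_maxnorm g x) g1.
have y0 x : 0 <= y x.
  by rewrite mulr_ge0 ?(ltW Np) //; move: (gx1 x); rewrite ler_norml; lra.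
have y2N x : y x < (2 * n.+1).+1%:R.
  rewrite -natr1 natrM -/N /y; move: (gx1 x); rewrite ler_norml => /andP[_ ?]; nra.
exists [ffun x => inord (Num.truncn (y x))].
apply: maxnorm_le => [|x]; first by rewrite invr_ge0 ltW.
have /andP[ky yk] := truncn_itv (y0 x).
have gxE : g x = y x / N - 1 by rewrite /y mulfK ?gt_eqF // addrK.
rewrite /grid ffunE inordK ?ltnS ?truncn_le_nat // gxE -/N.
rewrite opprB addrA subrK -mulrBl normrM ger0_norm ?subr_ge0 //.
rewrite ger0_norm ?invr_ge0 ?(ltW Np) //.
by rewrite -[leRHS]mul1r ler_pM2r ?invr_gt0 // lerBlDl natr1 ltW.
Qed.

End MaxNorm.

Arguments grid {R X n} h.

Section OperatorNorm.
Variables (R : realType) (X : finType) (A : (X -> R) -> (X -> R)).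
Implicit Types f : X -> R.

Let image_sphere := [set maxnorm (A f) | f in [set f | maxnorm f = 1]].

Hypothesis A_bounded : has_ubound image_sphere.
Hypothesis A_homog :
  forall l f, 0 <= l -> A (fun y => l * f y) = (fun y => l * A f y).

Lemma opnorm_ge f : maxnorm f = 1 -> maxnorm (A f) <= opnorm A.
Proof. by move=> f1; apply: (ub_le_sup A_bounded); exists f. Qed.

(* On an empty [X] the unit sphere is empty and [sup set0 = 0]. *)
Lemma image_sphere_empty :
  ~ (exists f, maxnorm f = 1) -> image_sphere = set0.
Proof. by move=> nf; apply/seteqP; split => // r [f f1 _]; apply: nf; exists f. Qed.

Lemma opnorm_ge0 : 0 <= opnorm A.
Proof.
have [[f f1]|nf] := pselect (exists f, maxnorm f = 1).
  exact: le_trans (maxnorm_ge0 _) (opnorm_ge f1).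
by rewrite /opnorm -/image_sphere image_sphere_empty // sup0.
Qed.

Lemma opnorm_le c : 0 <= c ->
  (forall f, maxnorm f = 1 -> maxnorm (A f) <= c) -> opnorm A <= c.
Proof.
move=> c0 Ac; have [[f f1]|nf] := pselect (exists f, maxnorm f = 1).
  by apply: ge_sup => [|_ [g g1 <-]]; [exists (maxnorm (A f)), f | exact: Ac].
by rewrite /opnorm -/image_sphere image_sphere_empty // sup0.
Qed.

Lemma maxnorm_op_le f : maxnorm (A f) <= maxnorm f * opnorm A.
Proof.
have [f0|fn0] := eqVneq (maxnorm f) 0.
  have ef : f = (fun y => 0 * f y).
    by rewrite (maxnorm_eq0 f0); apply: funext => y; rewrite mul0r.
  by rewrite f0 mul0r ef A_homog // maxnormZ // mul0r.
set m := maxnorm f in fn0 *.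
have mp : 0 < m by rewrite lt_neqAle eq_sym fn0 maxnorm_ge0.
have ef : f = (fun y => m * (m^-1 * f y)).
  by apply: funext => y; rewrite mulrA mulfV ?mul1r // gt_eqF.
rewrite {1}ef A_homog ?(ltW mp) // maxnormZ ?(ltW mp) // ler_pM2l //.
by apply: opnorm_ge; rewrite maxnormZ ?invr_ge0 ?(ltW mp) // mulVf.
Qed.

End OperatorNorm.

Section LowerTransitionOperator.
Variables (R : realType) (X : finType) (T : (X -> R) -> (X -> R)).
Hypothesis T_lto : lower_transition_operator T.
Implicit Types f g : X -> R.

Lemma lto_homog l f : 0 <= l -> T (fun y => l * f y) = (fun y => l * T f y).
Proof. by case: T_lto => _ _; apply. Qed.

Lemma lto0 x : T (fun _ => 0) x = 0.
Proof.
have -> : (fun _ : X => 0) = (fun y => 0 * (0 : R)) by apply: funext => y; rewrite mul0r.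
by rewrite lto_homog // mul0r.
Qed.

Lemma lto_ge f x : - maxnorm f <= T f x.
Proof.
case: T_lto => T_ge_inf _ _; apply: le_trans (T_ge_inf f x).
have [[y _]|nX] := pselect (exists y : X, True).
  apply: lb_le_inf => [|_ [z _ <-]]; first by exists (f y), y.
  rewrite lerNl -maxnormN; apply: le_trans (ler_norm _) _.
  exact: ler_maxnorm (fun y => - f y) z.
have -> : range f = set0.
  by apply/seteqP; split => // r [z _ _]; apply: nX; exists z.
by rewrite inf0 oppr_le0 maxnorm_ge0.
Qed.

Lemma lto_le f x : T f x <= maxnorm f.
Proof.
case: T_lto => _ T_superadd _.
have := T_superadd f (fun y => - f y) x.
under [fun y => f y + - f y]funext do rewrite subrr.
have := lto_ge (fun y => - f y) x; rewrite lto0 maxnormN; lra.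
Qed.

(* Superadditivity gives [T g x - T f x <= - T (f - g) x <= ||f - g||]. *)
Lemma lto_lipschitz f g x : `|T f x - T g x| <= maxnorm (fun y => f y - g y).
Proof.
case: T_lto => _ T_superadd _.
have half f0 g0 : T g0 x - T f0 x <= maxnorm (fun y => f0 y - g0 y).
  have := T_superadd g0 (fun y => f0 y - g0 y) x.
  under [fun y => g0 y + (f0 y - g0 y)]funext do rewrite addrC subrK.
  have := lto_ge (fun y => f0 y - g0 y) x; lra.
have := half f g; have := half g f; rewrite ler_norml maxnorm_distrC; lra.
Qed.

End LowerTransitionOperator.

Section TransitionDifference.
Variables (R : realType) (X : finType) (A B : (X -> R) -> (X -> R)).
Hypotheses (A_lto : lower_transition_operator A) (B_lto : lower_transition_operator B).
Implicit Types f g : X -> R.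

Lemma maxnorm_opsub_le f : maxnorm (opsub A B f) <= 2 * maxnorm f.
Proof.
apply: maxnorm_le => [|x]; first by rewrite mulr_ge0 ?maxnorm_ge0.
have := lto_ge A_lto f x; have := lto_le A_lto f x.
have := lto_ge B_lto f x; have := lto_le B_lto f x.
rewrite /opsub ler_norml; lra.
Qed.

Lemma opsub_bounded :
  has_ubound [set maxnorm (opsub A B f) | f in [set f | maxnorm f = 1]].
Proof.
by exists 2 => _ [f f1 <-]; have := maxnorm_opsub_le f; rewrite f1 mulr1.
Qed.

Lemma opsub_homog l f :
  0 <= l -> opsub A B (fun y => l * f y) = (fun y => l * opsub A B f y).
Proof.
by move=> l0; apply: funext => x; rewrite /opsub !lto_homog // mulrBr.
Qed.

Lemma maxnorm_opsub_lipschitz f g :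
  maxnorm (opsub A B f) <=
  maxnorm (opsub A B g) + 2 * maxnorm (fun y => f y - g y).
Proof.
apply: maxnorm_le => [|x].
  by rewrite addr_ge0 ?mulr_ge0 ?maxnorm_ge0.
have Af := lto_lipschitz A_lto f g x.
have Bf := lto_lipschitz B_lto g f x; rewrite maxnorm_distrC in Bf.
have ABg := ler_maxnorm (opsub A B g) x.
have split3 : A f x - B f x = (A f x - A g x) + (A g x - B g x) + (B g x - B f x).
  by rewrite !addrA !subrK.
rewrite /opsub split3; apply: le_trans (ler_normD _ _) _.
apply: le_trans (lerD (ler_normD _ _) (lexx _)) _; rewrite /opsub in ABg; lra.
Qed.

End TransitionDifference.

Theorem proposition1 (R : realType) (X : finType)
  (T : (X -> R) -> (X -> R)) (Tn : nat -> (X -> R) -> (X -> R)) :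
  lower_transition_operator T ->
  (forall n, lower_transition_operator (Tn n)) ->
  (opnorm (opsub (Tn n) T) @[n --> \oo] --> 0) <->
  (forall f : X -> R,
     maxnorm (fun x => Tn n f x - T f x) @[n --> \oo] --> 0).
Proof.
move=> T_lto Tn_lto; split.
  move=> opnorm_cvg0 f; apply: (@squeeze_cvgr _ _ _ _ (fun=> 0)
      (fun n => maxnorm f * opnorm (opsub (Tn n) T))).
  - apply: nearW => n; rewrite maxnorm_ge0.
    exact: maxnorm_op_le (opsub_bounded _ _) (opsub_homog _ _) f.
  - exact: cvg_cst.
  - by rewrite -(mulr0 (maxnorm f)); apply: cvgM => //; exact: cvg_cst.
move=> pointwise_cvg0; apply/cvgr0Pnorm_le => e e0.
have [N _ invN_small] := near_infty_natSinv_lt (PosNum (divr_gt0 e0 (ltr0n _ 4))).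
have {invN_small}invN : N.+1%:R^-1 <= e / 4 := ltW (invN_small N (leqnn N)).
have e2 : 0 < e / 2 by rewrite divr_gt0.
have grid_close : \forall n \near \oo, forall h,
    maxnorm (opsub (Tn n) T (@grid R X N h)) <= e / 2.
  apply: filter_forall => h; have /cvgr0Pnorm_le/(_ _ e2) := pointwise_cvg0 (grid h).
  by apply: filterS => n; rewrite ger0_norm ?maxnorm_ge0.
apply: filterS grid_close => n grid_close.
rewrite ger0_norm; last exact: opnorm_ge0 (opsub_bounded _ _).
apply: opnorm_le => [|f f1]; first exact: ltW.
have f_le1 : maxnorm f <= 1 by rewrite f1.
have [h fh] := grid_approx N f_le1.
apply: le_trans (maxnorm_opsub_lipschitz (Tn_lto n) T_lto f (grid h)) _.
have -> : e = e / 2 + 2 * (e / 4) by field.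
by rewrite lerD // ler_pM2l // (le_trans fh).
Qed.
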